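(* Let $\mathbb{F}_q$ be a finite field and let $T_1=\{A=(a_{ij})\in UU_4(\mathbb{F}_q): a_{34}=0\}$, a subgroup of the group $UU_4(\mathbb{F}_q)$ of $4\times4$ upper triangular unipotent matrices over $\mathbb{F}_q$. Then $T_1$ is an AC-group and $\omega(T_1)=q^2+1$.
   Context: A group is an AC-group if the centralizer of every non-central element is abelian. A subset $N$ of a group is non-commuting if $xy\ne yx$ for all distinct $x,y\in N$; $\omega(S)$ is the maximum cardinality of a non-commuting subset of $S$. *)

From mathcomp Require Import all_boot all_order all_algebra all_fingroup all_solvable.
Set Implicit Arguments. Unset Strict Implicit. Unset Printing Implicit Defensive.
Import GRing.Theory.
Local Open Scope group_scope.

Definition AC_group (gT : finGroupType) (G : {set gT}) : Prop :=
  forall x, x \in G -> x \notin 'Z(G) -> abelian 'C_G[x].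

Definition non_commuting (gT : finGroupType) (N : {set gT}) : bool :=
  [forall x in N, forall y in N, (x != y) ==> (x * y != y * x)].

Definition omega (gT : finGroupType) (S : {set gT}) : nat :=
  \max_(N : {set gT} | (N \subset S) && non_commuting N) #|N|.

Definition unitriangular (F : finFieldType) (A : 'M[F]_4) : bool :=
  [forall i : 'I_4, forall j : 'I_4,
     ((j < i)%N ==> (A i j == 0%R)) && ((i == j) ==> (A i j == 1%R))].

Definition UU4 (F : finFieldType) : {set {'GL_4[F]}} :=
  [set x : {'GL_4[F]} | unitriangular (GLval x)].

(* T_1 = { A in UU_4(F) : a_34 = 0 }; indices are 0-based, so a_34 is entry (2,3). *)
Definition T1 (F : finFieldType) : {set {'GL_4[F]}} :=
  [set x in UU4 F | GLval x (inord 2) (inord 3) == 0%R].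

From mathcomp Require Import all_boot all_order all_algebra all_fingroup all_solvable.
From mathcomp Require Import ring.
Set Implicit Arguments. Unset Strict Implicit. Unset Printing Implicit Defensive.
Import GRing.Theory.

(* Write an element of T1 as (a, u, v) with a = a12, u = (a13, a14) and
   v = (a23, a24).  Then (a, u, v)(a', u', v') = (a + a', u + u' + a v', v + v'),
   so two elements commute iff a v' = a' v.  The centre is {a = 0, v = 0}, and for
   (a, v) <> 0 the relation a v' = a' v propagates through (a, v), so centralisers
   of non-central elements are abelian.  Elements with the same slope (None when
   a = 0, Some (v / a) otherwise) commute, so a non-commuting set has at most
   q^2 + 1 elements; the elements (1, 0, v) and (0, 0, (1, 1)) attain the bound. *)

Section NonCommutingSets.
Local Open Scope group_scope.
Variable gT : finGroupType.
Implicit Types (S N : {set gT}).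

Lemma non_commutingP N :
  reflect {in N &, forall x y, x != y -> x * y != y * x} (non_commuting N).
Proof.
apply: (iffP forall_inP) => [ncN x y xN yN | ncN x xN].
  exact/implyP/(forall_inP (ncN x xN)).
by apply/forall_inP => y yN; apply/implyP/ncN.
Qed.

Lemma omega_leq_card S (K : finType) (k : gT -> K) :
  {in S &, forall x y, k x = k y -> commute x y} -> omega S <= #|K|.
Proof.
move=> k_comm; apply/bigmax_leqP => N /andP[sNS /non_commutingP ncN].
have k_inj : {in N &, injective k}.
  move=> x y xN yN kxy; apply/eqP/negPn/negP => neq_xy.
  have := ncN x y xN yN neq_xy.
  by rewrite (k_comm x y _ _ kxy) ?eqxx ?(subsetP sNS).
by rewrite -(card_in_imset k_inj) max_card.
Qed.

Lemma card_leq_omega S (T : finType) (f : T -> gT) :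
  (forall t, f t \in S) -> (forall s t, s != t -> f s * f t != f t * f s) ->
  #|T| <= omega S.
Proof.
move=> fS ncf; have f_inj : injective f.
  move=> s t fst; apply/eqP/negPn/negP => /ncf.
  by rewrite fst eqxx.
rewrite -cardsT -(card_imset _ f_inj); apply: leq_bigmax_cond.
apply/andP; split; first by apply/subsetP => _ /imsetP[t _ ->].
apply/non_commutingP => _ _ /imsetP[s _ ->] /imsetP[t _ ->] neq_fst.
by apply: ncf; apply: contraNneq neq_fst => ->.
Qed.

End NonCommutingSets.

Section ScaleCross.
Local Open Scope ring_scope.
Variables (K : fieldType) (V : lmodType K).

Lemma scale_cross_trans (a a1 a2 : K) (v v1 v2 : V) : (a != 0) || (v != 0) ->
  a *: v1 = a1 *: v -> a *: v2 = a2 *: v -> a1 *: v2 = a2 *: v1.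
Proof.
have [-> /= nz_v|nz_a _ av1 av2] := eqVneq a 0.
  rewrite !scale0r => /esym/eqP + /esym/eqP.
  by rewrite !scaler_eq0 (negPf nz_v) !orbF => /eqP-> /eqP->; rewrite !scale0r.
apply: (scalerI nz_a).
(* a (a1 v2) = a1 (a2 v) = a2 (a1 v) = a (a2 v1) *)
by rewrite scalerA mulrC -scalerA av2 [RHS]scalerA [a * a2]mulrC -scalerA av1
  scalerA [RHS]scalerA mulrC.
Qed.

Definition slope (a : K) (v : V) : option V :=
  if a == 0 then None else Some (a^-1 *: v).

Lemma slope_cross (a a' : K) (v v' : V) :
  slope a v = slope a' v' -> a *: v' = a' *: v.
Proof.
rewrite /slope; have [->|nz_a] := eqVneq a 0; have [->|nz_a'] := eqVneq a' 0 => //.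
  by rewrite !scale0r.
by case=> e; rewrite -[v'](scalerKV nz_a') -e scalerA mulrC -scalerA scalerKV.
Qed.

End ScaleCross.

Section T1Matrix.
Local Open Scope ring_scope.
Variable R : comUnitRingType.
Implicit Types (a : R) (u v : 'rV[R]_2).

(* [t1mx a u v] is the block matrix [[1, a, u]; [0, 1, v]; [0, 0, 1%:M]]. *)
Definition t1mx a u v : 'M[R]_4 := \matrix_(i, j)
  if i == j :> nat then 1 else
  match nat_of_ord i, nat_of_ord j with
  | 0, 1 => a
  | 0, k.+2 => u 0 (inord k)
  | 1, k.+2 => v 0 (inord k)
  | _, _ => 0
  end.

Definition t1_a (M : 'M[R]_4) : R := M (inord 0) (inord 1).
Definition t1_u (M : 'M[R]_4) : 'rV[R]_2 := \row_(k < 2) M (inord 0) (inord k.+2).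
Definition t1_v (M : 'M[R]_4) : 'rV[R]_2 := \row_(k < 2) M (inord 1) (inord k.+2).

Lemma t1_aK a u v : t1_a (t1mx a u v) = a.
Proof. by rewrite /t1_a mxE !inordK. Qed.

Lemma t1_uK a u v : t1_u (t1mx a u v) = u.
Proof. by apply/rowP => k; rewrite !mxE !inordK //= ?inord_val // ltnS; case: k. Qed.

Lemma t1_vK a u v : t1_v (t1mx a u v) = v.
Proof. by apply/rowP => k; rewrite !mxE !inordK //= ?inord_val // ltnS; case: k. Qed.

Lemma t1mx_mul a u v a' u' v' :
  t1mx a u v *m t1mx a' u' v' = t1mx (a + a') (u + u' + a *: v') (v + v').
Proof.
apply/matrixP => i j; rewrite !mxE !big_ord_recr big_ord0 /= !mxE.
by case: i => [[|[|[|[|i]]]] Hi] //; case: j => [[|[|[|[|j]]]] Hj] //=;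
  rewrite ?mxE; ring.
Qed.

Lemma t1mx0 : t1mx 0 0 0 = 1%:M.
Proof.
apply/matrixP => i j; rewrite !mxE.
by case: i => [[|[|[|[|i]]]] Hi] //; case: j => [[|[|[|[|j]]]] Hj] //=; rewrite mxE.
Qed.

Lemma t1mx_unit a u v : t1mx a u v \is a GRing.unit.
Proof.
suff: t1mx (- a) (a *: v - u) (- v) *m t1mx a u v = 1%:M by case/mulmx1_unit.
by rewrite t1mx_mul subrK scaleNr addrN !addNr t1mx0.
Qed.

Lemma t1mx_commute a u v a' u' v' :
  t1mx a u v *m t1mx a' u' v' = t1mx a' u' v' *m t1mx a u v <-> a *: v' = a' *: v.
Proof.
rewrite !t1mx_mul; split => [/(congr1 t1_u)|->].
  by rewrite !t1_uK [u' + u]addrC => /addrI.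
by rewrite addrC [v + _]addrC [u + _]addrC.
Qed.

End T1Matrix.

Section T1Unitriangular.
Local Open Scope ring_scope.
Variable F : finFieldType.

Lemma t1mx_unitriangular a (u v : 'rV[F]_2) : unitriangular (t1mx a u v).
Proof.
apply/forallP => i; apply/forallP => j; rewrite mxE.
by case: i => [[|[|[|[|i]]]] Hi] //; case: j => [[|[|[|[|j]]]] Hj]; rewrite //= eqxx.
Qed.

Lemma t1mx_of_unitriangular (M : 'M[F]_4) :
  unitriangular M -> M (inord 2) (inord 3) = 0 -> M = t1mx (t1_a M) (t1_u M) (t1_v M).
Proof.
move=> /forallP unit_M M23; apply/matrixP => i j.
rewrite -[i]inord_val -[j]inord_val mxE.
have /andP[/implyP lower /implyP diag] := forallP (unit_M (inord i)) (inord j).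
case: i j lower diag => [[|[|[|[|i]]]] Hi] [[|[|[|[|j]]]] Hj] //=;
  rewrite ?inordK //= => lower diag; rewrite ?mxE ?inordK //;
  by [apply/eqP/diag | apply/eqP/lower].
Qed.

End T1Unitriangular.

Section T1Group.
Local Open Scope group_scope.
Variable F : finFieldType.
Implicit Types (a : F) (u v : 'rV[F]_2) (x : {'GL_4[F]}).

Definition t1GL a u v : {'GL_4[F]} := FinRing.Unit (t1mx_unit a u v).

Lemma t1GL_cent1P a u v a' u' v' :
  reflect (a *: v' = a' *: v)%R (t1GL a u v \in 'C[t1GL a' u' v']).
Proof.
apply: (iffP cent1P); rewrite -(t1mx_commute a u v a' u' v') /commute.
  by move/(congr1 GLval); rewrite !GL_MxE.
by move=> comm_mx; apply: val_inj; rewrite [val _]GL_MxE [val _]GL_MxE.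
Qed.

Lemma T1P x : reflect (exists a u v, x = t1GL a u v) (x \in T1 F).
Proof.
apply: (iffP setIdP) => [[/[!inE] unit_x /eqP x23] | [a [u [v ->]]]].
  by exists (t1_a x), (t1_u x), (t1_v x); apply/val_inj/t1mx_of_unitriangular.
by rewrite inE t1mx_unitriangular /= mxE !inordK.
Qed.

Lemma t1GL_center u : t1GL 0%R u 0%R \in 'Z(T1 F).
Proof.
apply/centerP; split; first by apply/T1P; exists 0%R, u, 0%R.
by move=> _ /T1P[a [u' [v ->]]]; apply/cent1P/t1GL_cent1P; rewrite scale0r scaler0.
Qed.

Lemma T1_AC_group : AC_group (T1 F).
Proof.
move=> _ /T1P[a [u [v ->]]] noncentral.
have nz_av : ((a != 0) || (v != 0))%R.
  apply: contraR noncentral; rewrite negb_or !negbK => /andP[/eqP-> /eqP->].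
  exact: t1GL_center.
apply/centsP => _ /setIP[/T1P[a1 [u1 [v1 ->]]] /t1GL_cent1P/esym c1].
move=> _ /setIP[/T1P[a2 [u2 [v2 ->]]] /t1GL_cent1P/esym c2].
exact/cent1P/t1GL_cent1P/(scale_cross_trans nz_av c1 c2).
Qed.

Definition t1_slope x : option 'rV[F]_2 := slope (t1_a (GLval x)) (t1_v (GLval x)).

Lemma omega_T1_leq : omega (T1 F) <= #|{: option 'rV[F]_2}|.
Proof.
apply: (@omega_leq_card _ _ _ t1_slope).
move=> _ _ /T1P[a [u [v ->]]] /T1P[a' [u' [v' ->]]].
by rewrite /t1_slope !t1_aK !t1_vK => /slope_cross/t1GL_cent1P/cent1P.
Qed.

Definition t1_of_slope (p : option 'rV[F]_2) : {'GL_4[F]} :=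
  if p is Some v then t1GL 1%R 0%R v else t1GL 0%R 0%R (const_mx 1%R).

Lemma t1_of_slope_noncommute p q :
  p != q -> t1_of_slope p * t1_of_slope q != t1_of_slope q * t1_of_slope p.
Proof.
have c_neq0 : (const_mx 1 != 0 :> 'rV[F]_2)%R.
  by apply/eqP => /rowP/(_ ord0); rewrite !mxE; apply/eqP; rewrite oner_eq0.
case: p q => [v|] [w|] //= neq_pq; apply/eqP => /cent1P/t1GL_cent1P;
  rewrite ?scale1r ?scale0r.
- by move=> eq_wv; rewrite eq_wv eqxx in neq_pq.
- by move/eqP; rewrite (negPf c_neq0).
- by move/esym/eqP; rewrite (negPf c_neq0).
Qed.

Lemma omega_T1_geq : #|{: option 'rV[F]_2}| <= omega (T1 F).
Proof.
apply: card_leq_omega t1_of_slope_noncommute => -[v|]; apply/T1P.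
- by exists 1%R, 0%R, v.
- by exists 0%R, 0%R, (const_mx 1%R).
Qed.

End T1Group.

Theorem lemma4p4 (F : finFieldType) :
  AC_group (T1 F) /\ omega (T1 F) = (#|F| ^ 2 + 1)%N.
Proof.
split; first exact: T1_AC_group.
have card_slopes : #|{: option 'rV[F]_2}| = (#|F| ^ 2 + 1)%N.
  by rewrite card_option card_mx mul1n addn1.
by apply/eqP; rewrite eqn_leq -card_slopes omega_T1_leq omega_T1_geq.
Qed.
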